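(* Let $\mathfrak{H}$ be a Euclidean space and let $(\mathcal{X},\mathsf{S},\gamma,(\Lambda_{a})_{a\in\mathcal{A}})$ be a spectral decomposition system for $\mathfrak{H}$ such that the set $\{\Lambda_a\}_{a\in\mathcal{A}}$ is closed in $\mathscr{L}(\mathcal{X},\mathfrak{H})$. Let $D$ be a nonempty $\mathsf{S}$-invariant subset of $\mathcal{X}$, let $x,y\in\mathcal{X}$, and let $a\in\mathcal{A}$. Then $y\in N_{\mathsf{F}}(x;D)$ if and only if $\Lambda_a y\in N_{\mathsf{F}}(\Lambda_a x;\gamma^{-1}(D))$.
   Context: A Euclidean space is a finite-dimensional real Hilbert space; $\mathscr{L}(\mathcal{X},\mathfrak{H})$ carries the operator-norm topology. A spectral decomposition system for a Euclidean space $\mathfrak{H}$ is a tuple $(\mathcal{X},\mathsf{S},\gamma,(\Lambda_a)_{a\in\mathcal{A}})$ where $\mathcal{X}$ is a Euclidean space, $\mathsf{S}$ is a group acting on $\mathcal{X}$ such that each map $x\mapsto \mathsf{s}\cdot x$ is a linear isometry, $\gamma\colon\mathfrak{H}\to\mathcal{X}$ is a mapping, and each $\Lambda_a\colon\mathcal{X}\to\mathfrak{H}$ is a linear isometry, such that: [A] there exists a mapping $\tau\colon\mathcal{X}\to\mathcal{X}$ with $\tau(\mathsf{s}\cdot x)=\tau(x)$ for all $\mathsf{s},x$, $\tau(x)\in\mathsf{S}\cdot x$ for all $x$, and $\gamma\circ\Lambda_a=\tau$ for all $a\in\mathcal{A}$; [B] for every $X\in\mathfrak{H}$ there exists $a\in\mathcal{A}$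 with $X=\Lambda_a\gamma(X)$; [C] $\langle X,Y\rangle\le\langle\gamma(X),\gamma(Y)\rangle$ for all $X,Y\in\mathfrak{H}$. A set $D\subset\mathcal{X}$ is $\mathsf{S}$-invariant if $\mathsf{s}\cdot x\in D$ for all $x\in D$, $\mathsf{s}\in\mathsf{S}$. For a nonempty subset $C$ of a Euclidean space $\mathcal{H}$, the Fréchet normal cone is $N_{\mathsf{F}}(x;C)=\{y\in\mathcal{H}:\limsup_{z\to x,\,z\in C\setminus\{x\}}\langle z-x,y\rangle/\|z-x\|\le 0\}$ if $x\in C$ and $N_{\mathsf{F}}(x;C)=\varnothing$ if $x\notin C$. *)

From mathcomp Require Import all_boot all_order all_algebra.
From mathcomp Require Import all_classical all_reals all_analysis.

Set Implicit Arguments.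
Unset Strict Implicit.
Unset Printing Implicit Defensive.

Import Order.TTheory GRing.Theory Num.Theory.
Local Open Scope ring_scope.
Local Open Scope classical_set_scope.

(* Euclidean spaces are modelled as R^n, i.e. row vectors 'rV[R]_n,
   with the standard inner product.  Linear maps X -> H are matrices
   acting on the right: Λ x is written  x *m L. *)

Definition dotp (R : realType) (n : nat) (u v : 'rV[R]_n) : R := (u *m v^T) 0 0.

Definition enorm (R : realType) (n : nat) (u : 'rV[R]_n) : R := Num.sqrt (dotp u u).

Definition mx_isometry (R : realType) (n k : nat) (L : 'M[R]_(n, k)) : Prop :=
  forall x : 'rV[R]_n, enorm (x *m L) = enorm x.

Record isometric_group_action (R : realType) (n : nat) (G : Type) := {
  gmul : G -> G -> G;
  gone : G;
  ginv : G -> G;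
  gmulA : forall a b c, gmul a (gmul b c) = gmul (gmul a b) c;
  gmul1 : forall a, gmul gone a = a;
  gmulV : forall a, gmul (ginv a) a = gone;
  act : G -> 'rV[R]_n -> 'rV[R]_n;
  act1 : forall x, act gone x = x;
  actM : forall g h x, act (gmul g h) x = act g (act h x);
  act_linear : forall g (c : R) x y, act g (c *: x + y) = c *: act g x + act g y;
  act_isometry : forall g x, enorm (act g x) = enorm x
}.

Definition spectral_decomposition_system (R : realType) (m n : nat) (G : Type)
    (S : isometric_group_action R n G) (gamma : 'rV[R]_m -> 'rV[R]_n)
    (A : Type) (Lam : A -> 'M[R]_(n, m)) : Prop :=
  (forall a, mx_isometry (Lam a)) /\
  (exists tau : 'rV[R]_n -> 'rV[R]_n,
      (forall s x, tau (act S s x) = tau x) /\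
      (forall x, exists s, tau x = act S s x) /\
      (forall a x, gamma (x *m Lam a) = tau x)) /\
  (forall X : 'rV[R]_m, exists a, X = gamma X *m Lam a) /\
  (forall X Y : 'rV[R]_m, dotp X Y <= dotp (gamma X) (gamma Y)).

Definition S_invariant (R : realType) (n : nat) (G : Type)
    (S : isometric_group_action R n G) (D : set 'rV[R]_n) : Prop :=
  forall x s, D x -> D (act S s x).

(* Fréchet normal cone: y in N_F(x;C) iff x in C and
   limsup_{z -> x, z in C \ {x}} <z - x, y> / ||z - x|| <= 0,
   the limsup condition being unfolded as: for every eps > 0 there is
   delta > 0 such that the quotient is <= eps for all z in C \ {x}
   with ||z - x|| < delta. *)
Definition frechet_normal_cone (R : realType) (n : nat)
    (C : set 'rV[R]_n) (x : 'rV[R]_n) : set 'rV[R]_n :=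
  [set y | C x /\
     forall eps : R, 0 < eps -> exists2 delta : R, 0 < delta &
       forall z, C z -> z != x -> enorm (z - x) < delta ->
         dotp (z - x) y / enorm (z - x) <= eps].

(* the family {Lam a} viewed in the (finite-dimensional, hence
   operator-norm) topology of matrices *)
Definition mx_family_closed (R : realType) (n m : nat) (A : Type)
    (Lam : A -> 'M[R]_(n, m)) : Prop :=
  closed (range (fun a => (Lam a : 'M[R^o]_(n, m)))).

(** Let y be Fréchet normal to D at x and let Z be a point of γ⁻¹(D) close to
    Λ_a x.  For c > 0, axiom [A] writes γ(Λ_a (x + c y)) = s·(x + c y), and the
    point w = s⁻¹·γ(Z) of D is, since γ is nonexpansive, at least as close to
    x + c y as Z is to Λ_a (x + c y).  Expanding both squared distances and
    taking c proportional to ‖Z − Λ_a x‖ bounds ⟨Z − Λ_a x, Λ_a y⟩ by the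
    normal inequality at w, which is close to x.  Conversely Λ_a is an
    isometry mapping D into γ⁻¹(D), so the normal inequality pulls back. *)

From mathcomp Require Import all_boot all_order all_algebra.
From mathcomp Require Import all_classical all_reals all_analysis.
From mathcomp Require Import ring lra.
Import Order.TTheory GRing.Theory Num.Theory.
Set Implicit Arguments.
Unset Strict Implicit.
Local Open Scope ring_scope.
Local Open Scope classical_set_scope.

Section EuclideanRowSpace.
Variables (R : realType) (n : nat).
Implicit Types (u v w : 'rV[R]_n) (c : R).

Lemma dotpE u v : dotp u v = \sum_i u 0 i * v 0 i.
Proof. by rewrite /dotp !mxE; apply: eq_bigr => i _; rewrite mxE. Qed.

Lemma dotpC u v : dotp u v = dotp v u.
Proof. by rewrite !dotpE; apply: eq_bigr => i _; rewrite mulrC. Qed.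

Lemma dotpDl u v w : dotp (u + v) w = dotp u w + dotp v w.
Proof. by rewrite !dotpE -big_split; apply: eq_bigr => i _; rewrite !mxE mulrDl. Qed.

Lemma dotpZl c u v : dotp (c *: u) v = c * dotp u v.
Proof. by rewrite !dotpE mulr_sumr; apply: eq_bigr => i _; rewrite !mxE mulrA. Qed.

Lemma dotpNl u v : dotp (- u) v = - dotp u v.
Proof. by rewrite -scaleN1r dotpZl mulN1r. Qed.

Lemma dotpDr u v w : dotp u (v + w) = dotp u v + dotp u w.
Proof. by rewrite !(dotpC u) dotpDl. Qed.

Lemma dotpZr c u v : dotp u (c *: v) = c * dotp u v.
Proof. by rewrite !(dotpC u) dotpZl. Qed.

Lemma dotpNr u v : dotp u (- v) = - dotp u v.
Proof. by rewrite !(dotpC u) dotpNl. Qed.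

Lemma dotp0l v : dotp 0 v = 0.
Proof. by rewrite -(scale0r 0) dotpZl mul0r. Qed.

Lemma dotpp_ge0 u : 0 <= dotp u u.
Proof. by rewrite dotpE; apply: sumr_ge0 => i _; rewrite -expr2 sqr_ge0. Qed.

Lemma dotpp_eq0 u : (dotp u u == 0) = (u == 0).
Proof.
apply/eqP/eqP => [|->]; last exact: dotp0l.
rewrite dotpE => /psumr_eq0P u0; apply/rowP => i; rewrite mxE.
by apply/eqP; rewrite -sqrf_eq0 expr2 u0 // => j _; rewrite -expr2 sqr_ge0.
Qed.

Lemma enorm_sq u : enorm u ^+ 2 = dotp u u.
Proof. by rewrite sqr_sqrtr // dotpp_ge0. Qed.

Lemma enorm_ge0 u : 0 <= enorm u.
Proof. exact: sqrtr_ge0. Qed.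

Lemma enorm_eq0 u : (enorm u == 0) = (u == 0).
Proof. by rewrite sqrtr_eq0 -dotpp_eq0 eq_le dotpp_ge0 andbT. Qed.

Lemma enorm0 : enorm (0 : 'rV[R]_n) = 0.
Proof. by apply/eqP; rewrite enorm_eq0. Qed.

Lemma enorm_gt0 u : (0 < enorm u) = (u != 0).
Proof. by rewrite lt_def enorm_eq0 enorm_ge0 andbT. Qed.

Lemma enormZ c u : enorm (c *: u) = `|c| * enorm u.
Proof.
by rewrite /enorm dotpZl dotpZr mulrA -expr2 sqrtrM ?sqr_ge0 // sqrtr_sqr.
Qed.

Lemma enormN u : enorm (- u) = enorm u.
Proof. by rewrite -scaleN1r enormZ normrN1 mul1r. Qed.

Lemma enorm_sqD u v :
  enorm (u + v) ^+ 2 = enorm u ^+ 2 + 2 * dotp u v + enorm v ^+ 2.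
Proof. by rewrite !enorm_sq dotpDl !dotpDr (dotpC v u); lra. Qed.

Lemma enorm_sqB u v :
  enorm (u - v) ^+ 2 = enorm u ^+ 2 - 2 * dotp u v + enorm v ^+ 2.
Proof. by rewrite enorm_sqD dotpNr enormN; lra. Qed.

Lemma ler_dotp_enorm u v : dotp u v <= enorm u * enorm v.
Proof.
have [-> | u0] := eqVneq u 0; first by rewrite dotp0l enorm0 mul0r.
have [-> | v0] := eqVneq v 0; first by rewrite dotpC dotp0l enorm0 mulr0.
set a := enorm u; set b := enorm v.
have ab_gt0 : 0 < a * b by rewrite mulr_gt0 ?enorm_gt0.
have : 0 <= enorm (b *: u - a *: v) ^+ 2 by exact: sqr_ge0.
rewrite enorm_sqB !enormZ dotpZl dotpZr !ger0_norm ?enorm_ge0 // -/a -/b.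
have -> : (b * a) ^+ 2 - 2 * (b * (a * dotp u v)) + (a * b) ^+ 2
          = 2 * (a * b) * (a * b - dotp u v) by ring.
rewrite pmulr_rge0 ?subr_ge0 //; exact: mulr_gt0.
Qed.

Lemma ler_enormD u v : enorm (u + v) <= enorm u + enorm v.
Proof.
rewrite -ler_sqr ?nnegrE ?addr_ge0 ?enorm_ge0 // enorm_sqD sqrrD.
by have := ler_dotp_enorm u v; lra.
Qed.

End EuclideanRowSpace.

Lemma dotp_mulmx_isometry (R : realType) (n k : nat) (L : 'M[R]_(n, k)) :
  mx_isometry L -> forall u v, dotp (u *m L) (v *m L) = dotp u v.
Proof.
move=> L_iso u v; have := enorm_sqD (u *m L) (v *m L).
by rewrite -mulmxDl !L_iso enorm_sqD; lra.
Qed.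

Section GroupAction.
Variables (R : realType) (n : nat) (G : Type) (S : isometric_group_action R n G).

Lemma actB g u v : act S g (u - v) = act S g u - act S g v.
Proof. by rewrite -scaleN1r addrC act_linear scaleN1r addrC. Qed.

Lemma act_ginvK g : cancel (act S g) (act S (ginv S g)).
Proof. by move=> v; rewrite -actM gmulV act1. Qed.

End GroupAction.

Lemma frechet_normal_coneE (R : realType) (n : nat) (C : set 'rV[R]_n) x y :
  frechet_normal_cone C x y <->
  C x /\ forall eps, 0 < eps -> exists2 delta, 0 < delta &
    forall z, C z -> enorm (z - x) < delta -> dotp (z - x) y <= eps * enorm (z - x).
Proof.
split=> -[Cx Nxy]; split=> // e e0; have [d d0 Hd] := Nxy e e0; exists d => // z Cz.
- have [-> _ | zx lt_zx] := eqVneq z x; first by rewrite subrr dotp0l enorm0 mulr0.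
  by rewrite -ler_pdivrMr ?enorm_gt0 ?subr_eq0 //; exact: Hd.
- by move=> zx lt_zx; rewrite ler_pdivrMr ?enorm_gt0 ?subr_eq0 //; exact: Hd.
Qed.

Lemma ler_dotp_shift (R : realType) (n k : nat) (p y : 'rV[R]_n) (u Y : 'rV[R]_k) c :
  enorm Y = enorm y -> enorm (p - c *: y) <= enorm (u - c *: Y) ->
  2 * c * dotp u Y <= enorm u ^+ 2 + 2 * c * dotp p y.
Proof.
move=> Yy; rewrite -ler_sqr ?nnegrE ?enorm_ge0 // !enorm_sqB !dotpZr !enormZ Yy.
by have := sqr_ge0 (enorm p); lra.
Qed.

Section FrechetNormalConeTransfer.
Variables (R : realType) (n k : nat) (L : 'M[R]_(n, k)).
Variables (C : set 'rV[R]_n) (C' : set 'rV[R]_k).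
Hypothesis L_iso : mx_isometry L.
Hypothesis L_maps : forall z, C z -> C' (z *m L).
Hypothesis C'_approx : forall Z v, C' Z ->
  exists2 w, C w & enorm (w - v) <= enorm (Z - v *m L).

Lemma C'_approx_shift x y Z c : C' Z -> 0 <= c ->
  exists w, [/\ C w, enorm (w - x) <= enorm (Z - x *m L) + 2 * c * enorm y &
    2 * c * dotp (Z - x *m L) (y *m L)
      <= enorm (Z - x *m L) ^+ 2 + 2 * c * dotp (w - x) y].
Proof.
move=> C'Z c_ge0; have [w Cw] := C'_approx (x + c *: y) C'Z.
have -> : w - (x + c *: y) = (w - x) - c *: y by rewrite opprD addrA.
have -> : Z - (x + c *: y) *m L = (Z - x *m L) - c *: (y *m L).
  by rewrite mulmxDl -scalemxAl opprD addrA.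
move=> le_wv; exists w; split=> //; last exact: ler_dotp_shift (L_iso y) le_wv.
have := ler_enormD (w - x - c *: y) (c *: y).
have := ler_enormD (Z - x *m L) (- (c *: (y *m L))).
by rewrite subrK enormN !enormZ L_iso ger0_norm //; lra.
Qed.

Lemma mulmx_frechet_normal_cone x y :
  frechet_normal_cone C x y -> frechet_normal_cone C' (x *m L) (y *m L).
Proof.
move=> /frechet_normal_coneE[Cx Nxy]; apply/frechet_normal_coneE; split.
  exact: L_maps.
(* With c = ‖Z − x L‖ / e below, M bounds ‖w − x‖ / ‖Z − x L‖. *)
move=> e e_gt0; pose M := 1 + 2 * enorm y / e.
have M_gt0 : 0 < M by rewrite ltr_pwDl ?divr_ge0 ?mulr_ge0 ?enorm_ge0 ?ltW.
have e2M_gt0 : 0 < e / (2 * M) by rewrite divr_gt0 ?mulr_gt0.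
have [d1 d1_gt0 Hd1] := Nxy _ e2M_gt0.
exists (d1 / M) => [|Z C'Z]; first exact: divr_gt0.
set u := Z - x *m L; set d := enorm u => lt_d.
have [u0 | u_neq0] := eqVneq u 0; first by rewrite u0 dotp0l /d u0 enorm0 mulr0.
have d_gt0 : 0 < d by rewrite enorm_gt0.
pose c := d / e.
have c_gt0 : 0 < c by rewrite divr_gt0.
have ce : c * e = d by rewrite divfK ?gt_eqF.
have [w [Cw le_wx le_dot]] := C'_approx_shift x y C'Z (ltW c_gt0).
have {}le_wx : enorm (w - x) <= M * d.
  suff -> : M * d = d + 2 * c * enorm y by [].
  by rewrite /M /c; field; rewrite gt_eqF.
have lt_wx : enorm (w - x) < d1.
  by apply: (le_lt_trans le_wx); rewrite mulrC -ltr_pdivlMr.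
have le_dot_wx : dotp (w - x) y <= e * d / 2.
  have -> : e * d / 2 = e / (2 * M) * (M * d) by field; rewrite gt_eqF.
  exact: le_trans (Hd1 w Cw lt_wx) (ler_wpM2l (ltW e2M_gt0) le_wx).
have c2_gt0 : 0 < 2 * c by rewrite mulr_gt0.
rewrite -(ler_pM2l c2_gt0); apply: (le_trans le_dot).
have := ler_wpM2l (ltW c2_gt0) le_dot_wx.
have -> : 2 * c * (e * d / 2) = d ^+ 2 by rewrite -ce; field.
have -> : 2 * c * (e * d) = 2 * d ^+ 2 by rewrite -ce; ring.
by rewrite -/d; lra.
Qed.

Lemma frechet_normal_cone_of_mulmx x y :
  frechet_normal_cone C' (x *m L) (y *m L) -> frechet_normal_cone C x y.
Proof.
move=> /frechet_normal_coneE[C'xL NxyL]; apply/frechet_normal_coneE; split.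
  have [w Cw] := C'_approx x C'xL; rewrite subrr enorm0 => le_wx0.
  suff <- : w = x by [].
  by apply/eqP; rewrite -subr_eq0 -enorm_eq0 eq_le le_wx0 enorm_ge0.
move=> e e_gt0; have [d d_gt0 Hd] := NxyL e e_gt0; exists d => // z Cz.
rewrite -(L_iso (z - x)) -(dotp_mulmx_isometry L_iso) mulmxBl.
exact: Hd (L_maps Cz).
Qed.

Lemma frechet_normal_cone_mulmx x y :
  frechet_normal_cone C x y <-> frechet_normal_cone C' (x *m L) (y *m L).
Proof.
by split; [exact: mulmx_frechet_normal_cone | exact: frechet_normal_cone_of_mulmx].
Qed.

End FrechetNormalConeTransfer.

Section SpectralDecompositionSystem.
Variables (R : realType) (m n : nat) (G : Type) (S : isometric_group_action R n G).
Variables (gamma : 'rV[R]_m -> 'rV[R]_n) (A : Type) (Lam : A -> 'M[R]_(n, m)).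
Hypothesis sds : spectral_decomposition_system S gamma Lam.

Lemma Lam_isometry a : mx_isometry (Lam a).
Proof. by case: sds. Qed.

Lemma gamma_Lam_orbit a x : exists s, gamma (x *m Lam a) = act S s x.
Proof. by case: sds => _ [[tau [_ [tau_orbit gamma_Lam]]] _]; rewrite gamma_Lam. Qed.

Lemma enorm_gamma X : enorm (gamma X) = enorm X.
Proof.
case: sds => _ [_ [gamma_Lam_id _]]; have [b {2}->] := gamma_Lam_id X.
by rewrite Lam_isometry.
Qed.

Lemma enorm_gammaB X Y : enorm (gamma X - gamma Y) <= enorm (X - Y).
Proof.
case: sds => _ [_ [_ gamma_dotp]].
rewrite -ler_sqr ?nnegrE ?enorm_ge0 // !enorm_sqB !enorm_gamma.
by have := gamma_dotp X Y; lra.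
Qed.

Variable D : set 'rV[R]_n.
Hypothesis D_inv : S_invariant S D.

Lemma Lam_preimage_gamma a z : D z -> (gamma @^-1` D) (z *m Lam a).
Proof.
by move=> Dz; rewrite /preimage /=; have [s ->] := gamma_Lam_orbit a z; exact: D_inv.
Qed.

Lemma preimage_gamma_approx a Z v : (gamma @^-1` D) Z ->
  exists2 w, D w & enorm (w - v) <= enorm (Z - v *m Lam a).
Proof.
move=> DgZ; have [s gLv] := gamma_Lam_orbit a v.
exists (act S (ginv S s) (gamma Z)); first exact: D_inv.
rewrite -{1}(act_ginvK S s v) -actB act_isometry -gLv.
exact: enorm_gammaB.
Qed.

End SpectralDecompositionSystem.

Theorem proposition3p2 (R : realType) (m n : nat) (G : Type)
    (S : isometric_group_action R n G) (gamma : 'rV[R]_m -> 'rV[R]_n)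
    (A : Type) (Lam : A -> 'M[R]_(n, m)) :
  spectral_decomposition_system S gamma Lam ->
  mx_family_closed Lam ->
  forall D : set 'rV[R]_n, D !=set0 -> S_invariant S D ->
  forall (x y : 'rV[R]_n) (a : A),
    frechet_normal_cone D x y <->
    frechet_normal_cone (gamma @^-1` D) (x *m Lam a) (y *m Lam a).
Proof.
move=> sds _ D _ D_inv x y a; apply: frechet_normal_cone_mulmx.
- exact: Lam_isometry sds a.
- move=> z Dz; exact: (Lam_preimage_gamma sds D_inv a Dz).
- move=> Z v DZ; exact: (preimage_gamma_approx sds D_inv a v DZ).
Qed.
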